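(* Let $V$ and $Y$ be left and right canonical matrices, respectively, for $T$ at $\lambda_0$. Then $\Delta^{-1}VTY$ and $VTY\Delta^{-1}$ both belong to $\mathcal{H}_0^{r\times r}$ and are unimodular.
   Context: Let $\Omega\subset\mathbb{C}$ be open and $\lambda_0\in\Omega$ fixed. $\mathcal{H}$ denotes the ring of holomorphic functions on $\Omega$, and $\mathcal{H}_0$ the ring of functions holomorphic in some neighborhood of $\lambda_0$. Write $\chi_0(\lambda)=\lambda-\lambda_0$. A matrix $M\in\mathcal{H}_0^{n\times n}$ is unimodular if it has an inverse in $\mathcal{H}_0^{n\times n}$ (equivalently, $M(\lambda_0)$ is nonsingular). Throughout, $T\in\mathcal{H}^{n\times n}$ with $\det T$ not identically zero and $\det T(\lambda_0)=0$, and $r=\dim\ker T(\lambda_0)$. There exist unimodular $U_L,U_R\in\mathcal{H}_0^{n\times n}$ and uniquely determined integers $m_1\ge\cdots\ge m_n\ge 0$ (the partial multiplicities) with $U_LTU_R=\mathrm{diag}(\chi_0^{m_1},\dots,\chi_0^{m_n})$; $m_i>0$ exactly for $i\le r$. Set $\Delta=\mathrm{diag}(\chi_0^{m_1},\dots,\chi_0^{m_r})$. A root function for $T$ at $\lambda_0$ is $y\in\mathcal{H}^n$ with $y(\lambda_0)\neq0$ and $T(\lambda_0)y(\lambda_0)=0$; its multiplicity $\nu(y)$ is the order of the zero of $Ty$ at $\lambda_0$. A right canonical matrix for $T$ at $\lambda_0$ is $Y\in\mathcal{H}^{n\times r}$ whose columns $y_1,\dots,y_r$ are root functions such that (a) $y_1(\lambda_0),\dots,y_r(\lambda_0)$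 are linearly independent, (b) $\sum_{i=1}^r\nu(y_i)=\sum_{i=1}^r m_i$, (c) $\nu(y_1)\ge\cdots\ge\nu(y_r)$. A left root function is a row vector $v\in\mathcal{H}^{1\times n}$ with $v(\lambda_0)\ne0$ and $v(\lambda_0)T(\lambda_0)=0$, with multiplicity the order of the zero of $vT$ at $\lambda_0$; a left canonical matrix $V\in\mathcal{H}^{r\times n}$ is defined analogously. *)

(* The complex numbers are
   C := (R[i])^o for an arbitrary R : realType (R[i] from mathcomp-real-closed),
   viewed as a normed module over itself, so that [derivable f z 1] is
   complex differentiability at z. *)
From HB Require Import structures.
From mathcomp Require Import all_boot all_order all_algebra.
From mathcomp Require Import complex.
From mathcomp Require Import all_classical all_reals all_analysis.
Set Implicit Arguments. Unset Strict Implicit. Unset Printing Implicit Defensive.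
Import Order.TTheory GRing.Theory Num.Theory.
Local Open Scope ring_scope.
Local Open Scope classical_set_scope.

Notation CC R := ((R[i])^o).

Definition holo_at (R : realType) (p q : nat)
  (f : CC R -> 'M[CC R]_(p, q)) (z : CC R) : Prop :=
  forall i j, derivable (fun w => f w i j) z 1.

Definition holo_on (R : realType) (p q : nat) (Omega : set (CC R))
  (f : CC R -> 'M[CC R]_(p, q)) : Prop :=
  forall z, Omega z -> holo_at f z.

Definition holo_near (R : realType) (p q : nat) (lam0 : CC R)
  (f : CC R -> 'M[CC R]_(p, q)) : Prop :=
  \forall z \near lam0, holo_at f z.

Definition unimodular (R : realType) (n : nat) (lam0 : CC R)
  (M : CC R -> 'M[CC R]_n) : Prop :=
  holo_near lam0 M /\
  exists N : CC R -> 'M[CC R]_n, holo_near lam0 N /\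
    \forall z \near lam0, M z *m N z = 1%:M /\ N z *m M z = 1%:M.

Definition zero_order (R : realType) (p q : nat) (lam0 : CC R)
  (w : CC R -> 'M[CC R]_(p, q)) (k : nat) : Prop :=
  exists h : CC R -> 'M[CC R]_(p, q),
    holo_near lam0 h /\ h lam0 != 0 /\
    \forall z \near lam0, w z = (z - lam0) ^+ k *: h z.

(* Right canonical matrix Y (n x r) for T at lam0, given the partial
   multiplicities m 0 >= ... >= m (n-1) (0-indexed). Columns y_i of Y. *)
Definition right_canonical (R : realType) (n r : nat) (Omega : set (CC R))
  (lam0 : CC R) (T : CC R -> 'M[CC R]_n) (m : nat -> nat)
  (Y : CC R -> 'M[CC R]_(n, r)) : Prop :=
  holo_on Omega Y /\
  (forall i : 'I_r, col i (Y lam0) != 0 /\ T lam0 *m col i (Y lam0) = 0) /\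
  \rank (Y lam0) = r /\
  exists nu : 'I_r -> nat,
    (forall i : 'I_r, zero_order lam0 (fun z => T z *m col i (Y z)) (nu i)) /\
    (\sum_(i < r) nu i = \sum_(i < r) m i)%N /\
    (forall i j : 'I_r, (i <= j)%N -> (nu j <= nu i)%N).

Definition left_canonical (R : realType) (n r : nat) (Omega : set (CC R))
  (lam0 : CC R) (T : CC R -> 'M[CC R]_n) (m : nat -> nat)
  (V : CC R -> 'M[CC R]_(r, n)) : Prop :=
  holo_on Omega V /\
  (forall i : 'I_r, row i (V lam0) != 0 /\ row i (V lam0) *m T lam0 = 0) /\
  \rank (V lam0) = r /\
  exists nu : 'I_r -> nat,
    (forall i : 'I_r, zero_order lam0 (fun z => row i (V z) *m T z) (nu i)) /\
    (\sum_(i < r) nu i = \sum_(i < r) m i)%N /\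
    (forall i j : 'I_r, (i <= j)%N -> (nu j <= nu i)%N).

Definition powdiag (R : realType) (k : nat) (lam0 : CC R) (m : nat -> nat)
  (z : CC R) : 'M[CC R]_k :=
  diag_mx (\row_(i < k) (z - lam0) ^+ (m i)).

From HB Require Import structures.
From mathcomp Require Import all_boot all_order all_algebra.
From mathcomp Require Import complex.
From mathcomp Require Import fingroup perm.
From mathcomp Require Import all_classical all_reals all_analysis.
Import Order.TTheory GRing.Theory Num.Theory.
Local Open Scope ring_scope.
Local Open Scope classical_set_scope.

(* Let D = diag((z - l)^m_i) = UL T UR be the local Smith form.  The rows of
   V T vanish to orders nu_i, so V T = diag((z - l)^nu_i) H with H holomorphic,
   and A := V UL^-1 satisfies A D = diag((z - l)^nu_i) (H UR).  Since V(l) T(l)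
   = 0, the last n - r columns of A(l) vanish and its leading r x r block is
   invertible; a nonzero term of its determinant gives nu_i <= m_s(i) for a
   permutation s, and as both sequences are nonincreasing with equal sums,
   nu = m.  Comparing vanishing orders entrywise, the leading blocks of A(l)
   and (H UR)(l) are block triangular in opposite directions with equal
   diagonal blocks, hence have equal determinants.  So the reduced product
   D_r^-1 V T Y is H Y, whose value at l is the product of two invertible
   r x r blocks.  The right-hand statement follows by transposition. *)

Lemma sum_leq_eq {I : finType} {g h : I -> nat} :
  (forall i, g i <= h i)%N -> (\sum_i g i = \sum_i h i)%N -> forall i, g i = h i.
Proof.
move=> gh sum_gh i; apply/eqP.
have /leqif_sum[_ eq_sum] := fun i (_ : true) => leqif_eq (gh i).
by move: eq_sum; rewrite sum_gh eqxx => /esym/forall_inP/(_ i isT).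
Qed.

Lemma perm_leq_eq {T : finType} (s : {perm T}) (f : T -> nat) :
  (forall i, f i <= f (s i))%N -> forall i, f (s i) = f i.
Proof.
move=> le_fs i; have sum_fs : (\sum_i f i = \sum_i f (s i))%N.
  by rewrite (reindex_inj (@perm_inj _ s)).
by rewrite (sum_leq_eq le_fs sum_fs i).
Qed.

Lemma nonincreasing_perm_eq r (s : 'S_r) (f g : 'I_r -> nat) :
  (forall i, f i = g (s i)) ->
  (forall i j : 'I_r, i <= j -> f j <= f i)%N ->
  (forall i j : 'I_r, i <= j -> g j <= g i)%N ->
  forall i, f i = g i.
Proof.
move=> fg f_dec g_dec.
have ord_sorted : sorted (relpre val ltn) (enum 'I_r).
  by rewrite -sorted_map val_enum_ord iota_ltn_sorted.
have sorted_dec (h : 'I_r -> nat) :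
    (forall i j : 'I_r, i <= j -> h j <= h i)%N ->
    sorted (fun x y => y <= x)%N (map h (enum 'I_r)).
  move=> h_dec; apply: homo_sorted ord_sorted => i j /= /ltnW; exact: h_dec.
have perm_fg : perm_eq (map f (enum 'I_r)) (map g (enum 'I_r)).
  rewrite (eq_map fg) map_comp; apply/perm_map/uniq_perm; first 2 last.
  - move=> i; rewrite mem_enum; apply/mapP; exists (s^-1 i)%g.
      by rewrite mem_enum.
    by rewrite permKV.
  - by rewrite map_inj_uniq ?enum_uniq //; exact: perm_inj.
  - exact: enum_uniq.
have := sorted_eq
  (fun y x z (yx : (y <= x)%N) (zy : (z <= y)%N) => leq_trans zy yx)
  (fun x y (h : ((y <= x) && (x <= y))%N) => esym (anti_leq h))
  (sorted_dec _ f_dec) (sorted_dec _ g_dec) perm_fg.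
by move/eq_in_map => fg_enum i; apply: fg_enum; rewrite mem_enum.
Qed.

Lemma nonincreasing_zero_suffix n (m : nat -> nat) :
  (forall i j, i <= j -> j < n -> m j <= m i)%N ->
  exists2 p, (p <= n)%N & forall k, (k < n)%N -> (m k == 0%N) = (p <= k)%N.
Proof.
move=> m_dec; set p := find (fun k => m k == 0%N) (iota 0 n).
have pn : (p <= n)%N by rewrite -[X in (_ <= X)%N](size_iota 0 n) find_size.
exists p => // k kn; have [pk | kp] := leqP p k.
  have : m (nth 0%N (iota 0 n) p) == 0%N.
    apply: (@nth_find _ 0%N (fun k => m k == 0%N)).
    by rewrite has_find size_iota (leq_ltn_trans pk kn).
  rewrite nth_iota ?add0n ?(leq_ltn_trans pk kn) // => /eqP mp0.
  by have := m_dec p k pk kn; rewrite mp0 leqn0.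
by have := before_find 0%N kp; rewrite nth_iota // add0n => ->.
Qed.

Lemma det_neq0_perm (K : idomainType) r (A : 'M[K]_r) :
  \det A != 0 -> exists s : 'S_r, \prod_i A i (s i) != 0.
Proof.
move=> detA0; apply/not_existsP => prod0; move/eqP: detA0; apply.
apply: big1 => s _; move/negP: (prod0 s); rewrite negbK => /eqP ->.
by rewrite mulr0.
Qed.

(* With rows and columns grouped by the value of [f], [A] and [C] are block
   triangular in opposite directions and have the same diagonal blocks. *)
Lemma det_eq_graded {K : comRingType} {r} {A C : 'M[K]_r} (f : 'I_r -> nat) :
  (forall i k, (f k < f i)%N -> A i k = 0) ->
  (forall i k, (f i < f k)%N -> C i k = 0) ->
  (forall i k, f i = f k -> A i k = C i k) -> \det A = \det C.
Proof.
move=> A0 C0 AC; apply: eq_bigr => s _; congr (_ * _).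
have [fs_eq | /forallPn[i0 /eqP fs_neq]] := boolP [forall i, f (s i) == f i].
  by apply: eq_bigr => i _; apply/AC/esym/eqP/(forallP fs_eq).
have [i lt_i] : exists i, (f (s i) < f i)%N.
  apply/not_existsP => ge; apply: fs_neq; apply: perm_leq_eq => j.
  by rewrite leqNgt; apply/negP/ge.
have [j lt_j] : exists j, (f j < f (s j))%N.
  apply/not_existsP => le; apply: fs_neq; apply/esym.
  rewrite -{1}(permK s i0); apply: (perm_leq_eq (s^-1)%g) => k.
  by rewrite -{1}(permKV s k) leqNgt; apply/negP/le.
by rewrite (bigD1 i) //= A0 // mul0r (bigD1 j) //= C0 // mul0r.
Qed.

Lemma rsubmx_eq0_mul_diag {K : idomainType} {p r q} {A : 'M[K]_(p, r + q)}
    {d : 'rV[K]_(r + q)} :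
  (forall k, d 0 (rshift r k) != 0) -> A *m diag_mx d = 0 -> rsubmx A = 0.
Proof.
move=> d0 Ad; apply/matrixP => i k; rewrite !mxE.
move/matrixP/(_ i (rshift r k)): Ad; rewrite mul_mx_diag !mxE => /eqP.
by rewrite mulf_eq0 (negbTE (d0 k)) orbF => /eqP.
Qed.

Lemma dsubmx_eq0_diag_mul {K : idomainType} {p r q} {B : 'M[K]_(r + q, p)}
    {d : 'rV[K]_(r + q)} :
  (forall k, d 0 (rshift r k) != 0) -> diag_mx d *m B = 0 -> dsubmx B = 0.
Proof.
move=> d0 dB; apply: trmx_inj; rewrite trmx_dsub trmx0.
by apply: (rsubmx_eq0_mul_diag d0); rewrite -tr_diag_mx -trmx_mul dB trmx0.
Qed.

Lemma lsubmx_unit {K : fieldType} {r q} {A : 'M[K]_(r, r + q)} :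
  rsubmx A = 0 -> \rank A = r -> lsubmx A \in unitmx.
Proof.
move=> A2 rkA; rewrite -row_free_unit /row_free eqn_leq rank_leq_row -{1}rkA.
rewrite {1}(_ : A = lsubmx A *m row_mx 1%:M 0) ?mxrankM_maxl //.
by rewrite mul_mx_row mulmx1 mulmx0 -A2 hsubmxK.
Qed.

Lemma usubmx_unit {K : fieldType} {r q} {B : 'M[K]_(r + q, r)} :
  dsubmx B = 0 -> \rank B = r -> usubmx B \in unitmx.
Proof.
move=> B2 rkB; rewrite -unitmx_tr trmx_usub lsubmx_unit ?mxrank_tr //.
by rewrite -trmx_dsub B2 trmx0.
Qed.

Lemma mulmx_dsubmx0 {K : pzRingType} {p r q s} (C : 'M[K]_(p, r + q))
    {B : 'M[K]_(r + q, s)} :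
  dsubmx B = 0 -> C *m B = lsubmx C *m usubmx B.
Proof.
by move=> B2; rewrite -{1}(hsubmxK C) -{1}(vsubmxK B) mul_row_col B2 mulmx0 addr0.
Qed.

Lemma powdiag_tail_eq0 {R : realType} n (l : CC R) (m : nat -> nat) :
  (forall i j, i <= j -> j < n -> m j <= m i)%N ->
  forall k, (n - \rank (powdiag n l m l) <= k)%N -> (k < n)%N -> m k = 0%N.
Proof.
move=> /nonincreasing_zero_suffix[p pn m0].
have -> : powdiag n l m l = copid_mx p.
  apply/matrixP => i j; rewrite /copid_mx /pid_mx !mxE subrr expr0n.
  rewrite m0 // ltnNge; case: (p <= i)%N => /=.
    by rewrite andbF subr0 mulr1n.
  by rewrite andbT mul0rn subrr.
rewrite rank_copid_mx // subKn // => k pk kn.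
by apply/eqP; rewrite m0.
Qed.

Lemma powdiag_unit {R : realType} k (l z : CC R) (m : nat -> nat) :
  z != l -> powdiag k l m z \in unitmx.
Proof.
move=> zl; rewrite unitmxE unitfE det_diag; apply/prodf_neq0 => i _.
by rewrite mxE expf_neq0 // subr_eq0.
Qed.

Section HolomorphicCalculus.
Context {R : realType}.
Implicit Types (l z : CC R).

Lemma derivable_sumr (I : Type) (s : seq I) (P : pred I)
    (F : I -> CC R -> CC R) z :
  (forall i, P i -> derivable (F i) z 1) ->
  derivable (fun w => \sum_(i <- s | P i) F i w) z 1.
Proof.
move=> dF; elim: s => [|i s IH].
  have -> : (fun w => \sum_(i <- [::] | P i) F i w) = cst 0.
    by apply/funext => w; rewrite big_nil.
  exact: derivable_cst.
have -> : (fun w => \sum_(j <- i :: s | P j) F j w) =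
    (fun w => (if P i then F i w else 0) + \sum_(j <- s | P j) F j w).
  by apply/funext => w; rewrite big_cons; case: (P i); rewrite ?add0r.
apply: derivableD IH.
by case: (boolP (P i)) => Pi; [exact: dF | exact: derivable_cst].
Qed.

Lemma derivable_prodr (I : Type) (s : seq I) (P : pred I)
    (F : I -> CC R -> CC R) z :
  (forall i, P i -> derivable (F i) z 1) ->
  derivable (fun w => \prod_(i <- s | P i) F i w) z 1.
Proof.
move=> dF; elim: s => [|i s IH].
  have -> : (fun w => \prod_(i <- [::] | P i) F i w) = cst 1.
    by apply/funext => w; rewrite big_nil.
  exact: derivable_cst.
have -> : (fun w => \prod_(j <- i :: s | P j) F j w) =
    (fun w => (if P i then F i w else 1) * \prod_(j <- s | P j) F j w).
  by apply/funext => w; rewrite big_cons; case: (P i); rewrite ?mul1r.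
apply: derivableM IH.
by case: (boolP (P i)) => Pi; [exact: dF | exact: derivable_cst].
Qed.

Lemma derivable_shift_pow l k z : derivable (fun w => (w - l) ^+ k) z 1.
Proof.
have dB : derivable (fun w => w - l) z 1.
  exact: derivableD (@derivable_id _ _ z 1) (derivable_cst (- l) z 1).
elim: k => [|k IH].
  have -> : (fun w => (w - l) ^+ 0) = cst 1 by apply/funext => w; rewrite expr0.
  exact: derivable_cst.
have -> : (fun w => (w - l) ^+ k.+1) = (fun w => (w - l) * (w - l) ^+ k).
  by apply/funext => w; rewrite exprS.
exact: derivableM dB IH.
Qed.

(* [derivableV] itself fails to unify against the instances of [CC R] when
   applied to a concrete function; this restatement does not. *)
Lemma derivable_inv {f : CC R -> CC R} {z} :
  f z != 0 -> derivable f z 1 -> derivable (fun w => (f w)^-1) z 1.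
Proof. by move=> fz0 df; exact: derivableV fz0 df. Qed.

Lemma derivable_det {p} {f : CC R -> 'M[CC R]_p} {z} :
  holo_at f z -> derivable (fun w => \det (f w)) z 1.
Proof.
move=> hf; apply: derivable_sumr => s _.
have -> : (fun w => (-1) ^+ s * \prod_i f w i (s i)) =
    (fun w => cst ((-1) ^+ s) w * \prod_i f w i (s i)) by [].
by apply: derivableM; [exact: derivable_cst | apply: derivable_prodr => i _].
Qed.

Lemma holo_at_mul {p q s} {f : CC R -> 'M[CC R]_(p, q)}
    {g : CC R -> 'M[CC R]_(q, s)} {z} :
  holo_at f z -> holo_at g z -> holo_at (fun w => f w *m g w) z.
Proof.
move=> hf hg i j.
have -> : (fun w => (f w *m g w) i j) = (fun w => \sum_k f w i k * g w k j).
  by apply/funext => w; rewrite mxE.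
by apply: derivable_sumr => k _; exact: derivableM (hf i k) (hg k j).
Qed.

Lemma holo_at_scale {p q} {c : CC R -> CC R} {f : CC R -> 'M[CC R]_(p, q)} {z} :
  derivable c z 1 -> holo_at f z -> holo_at (fun w => c w *: f w) z.
Proof.
move=> hc hf i j.
have -> : (fun w => (c w *: f w) i j) = (fun w => c w * f w i j).
  by apply/funext => w; rewrite mxE.
exact: derivableM hc (hf i j).
Qed.

Lemma holo_at_tr {p q} {f : CC R -> 'M[CC R]_(p, q)} {z} :
  holo_at f z -> holo_at (fun w => (f w)^T) z.
Proof.
move=> hf i j.
have -> : (fun w => (f w)^T i j) = (fun w => f w j i).
  by apply/funext => w; rewrite mxE.
exact: hf.
Qed.

Lemma holo_at_adj {p} {f : CC R -> 'M[CC R]_p} {z} :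
  holo_at f z -> holo_at (fun w => \adj (f w)) z.
Proof.
move=> hf i j.
have -> : (fun w => \adj (f w) i j) =
    (fun w => cst ((-1) ^+ (j + i)) w * \det (row' j (col' i (f w)))).
  by apply/funext => w; rewrite mxE.
apply: derivableM; first exact: derivable_cst.
apply: derivable_det => a b.
have -> : (fun w => row' j (col' i (f w)) a b) =
    (fun w => f w (lift j a) (lift i b)).
  by apply/funext => w; rewrite !mxE.
exact: hf.
Qed.

Lemma holo_near_mul {p q s l} {f : CC R -> 'M[CC R]_(p, q)}
    {g : CC R -> 'M[CC R]_(q, s)} :
  holo_near l f -> holo_near l g -> holo_near l (fun w => f w *m g w).
Proof. by move=> hf hg; apply: filterS2 hf hg => z; exact: holo_at_mul. Qed.

Lemma holo_near_tr {p q l} {f : CC R -> 'M[CC R]_(p, q)} :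
  holo_near l f -> holo_near l (fun w => (f w)^T).
Proof. by move=> hf; apply: filterS hf => z; exact: holo_at_tr. Qed.

Lemma holo_on_near {p q} {Omega : set (CC R)} {l} {f : CC R -> 'M[CC R]_(p, q)} :
  open Omega -> Omega l -> holo_on Omega f -> holo_near l f.
Proof.
move=> oO Ol hf; have : nbhs l Omega by exact: open_nbhs_nbhs.
by apply: filterS => z /hf.
Qed.

End HolomorphicCalculus.

Section UnimodularFunctions.
Context {R : realType}.
Implicit Types (l z : CC R).

Lemma unimodular_of_det {p l} {M : CC R -> 'M[CC R]_p} :
  holo_near l M -> \det (M l) != 0 -> unimodular l M.
Proof.
move=> hM detM0; split => //.
have cdet : {for l, continuous (fun w => \det (M w))}.
  apply/differentiable_continuous/derivable1_diffP.
  exact: derivable_det (nbhs_singleton hM).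
have detM : \forall z \near l, \det (M z) != 0 by exact: cvgr_neq0 _ cdet detM0.
exists (fun z => (\det (M z))^-1 *: \adj (M z)); split.
  near=> z.
  have hz : holo_at M z by near: z; exact: hM.
  have dz : \det (M z) != 0 by near: z; exact: detM.
  apply: holo_at_scale; last exact: holo_at_adj hz.
  exact: derivable_inv dz (derivable_det hz).
near=> z; have dz : \det (M z) != 0 by near: z; exact: detM.
by rewrite -scalemxAr -scalemxAl mul_mx_adj mul_adj_mx scale_scalar_mx mulVf.
Unshelve. all: by end_near.
Qed.

Lemma unimodular_unit {p l} {M : CC R -> 'M[CC R]_p} :
  unimodular l M -> M l \in unitmx.
Proof. by case=> _ [N [_ /nbhs_singleton[/mulmx1_unit[]]]]. Qed.

Lemma unimodular_tr {p l} {M : CC R -> 'M[CC R]_p} :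
  unimodular l M -> unimodular l (fun z => (M z)^T).
Proof.
case=> hM [N [hN MN]]; split; first exact: holo_near_tr.
exists (fun z => (N z)^T); split; first exact: holo_near_tr.
by apply: filterS MN => z [MN1 NM1]; rewrite -!trmx_mul MN1 NM1 trmx1.
Qed.

Lemma zero_order_tr {p q l} {w : CC R -> 'M[CC R]_(p, q)} {k} :
  zero_order l w k -> zero_order l (fun z => (w z)^T) k.
Proof.
case=> h [hh [h0 wh]]; exists (fun z => (h z)^T).
split; first exact: holo_near_tr.
split; first by rewrite trmx_eq0.
by apply: filterS wh => z ->; rewrite linearZ.
Qed.

End UnimodularFunctions.

Section VanishingOrder.
Context {R : realType}.
Implicit Types (l z : CC R) (f g : CC R -> CC R).

Lemma eq_at_of_near_punctured {f g l} :
  {for l, continuous f} -> {for l, continuous g} ->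
  (\forall z \near l^', f z = g z) -> f l = g l.
Proof.
move=> cf cg fg.
have fl : f @ l^' --> f l := (continuous_withinNx f l).1 cf.
have gl : f @ l^' --> g l.
  apply: cvg_trans ((continuous_withinNx g l).1 cg); apply: near_eq_cvg.
  by apply: filterS fg => z ->.
exact: (@cvg_unique _ (@norm_hausdorff _ (CC R)) _ _ _ _ fl gl).
Qed.

Lemma value_at_of_near_pow_eq (a b : nat) {f g l} :
  derivable f l 1 -> derivable g l 1 -> (a <= b)%N ->
  (\forall z \near l, (z - l) ^+ a * f z = (z - l) ^+ b * g z) ->
  f l = 0 ^+ (b - a) * g l.
Proof.
move=> df dg ab fg.
have cont (h : CC R -> CC R) : derivable h l 1 -> {for l, continuous h}.
  by move=> dh; apply/differentiable_continuous/derivable1_diffP.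
have dh : derivable (fun w => (w - l) ^+ (b - a) * g w) l 1.
  exact: derivableM (derivable_shift_pow l (b - a) l) dg.
have := eq_at_of_near_punctured (cont _ df) (cont _ dh); rewrite subrr; apply.
rewrite near_withinE; apply: filterS fg => z fgz /= zl.
have za0 : (z - l) ^+ a != 0 by rewrite expf_neq0 // subr_eq0.
by apply: (mulfI za0); rewrite fgz mulrA -exprD subnKC.
Qed.

Lemma graded_entries_at {p s} (a : 'I_s -> nat) (b : 'I_p -> nat) {l}
    {A C : CC R -> 'M[CC R]_(p, s)} :
  holo_at A l -> holo_at C l ->
  (\forall z \near l, A z *m diag_mx (\row_k (z - l) ^+ a k) =
                      diag_mx (\row_i (z - l) ^+ b i) *m C z) ->
  forall i k, [/\ (a k < b i)%N -> A l i k = 0,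
                  (b i < a k)%N -> C l i k = 0 &
                  a k = b i -> A l i k = C l i k].
Proof.
move=> hA hC AC i k.
have ACik : \forall z \near l,
    (z - l) ^+ a k * A z i k = (z - l) ^+ b i * C z i k.
  apply: filterS AC => z /matrixP/(_ i k).
  by rewrite mul_mx_diag mul_diag_mx !mxE mulrC.
have CAik : \forall z \near l,
    (z - l) ^+ b i * C z i k = (z - l) ^+ a k * A z i k.
  by apply: filterS ACik => z ->.
split=> [ab | ba | ab].
- have := value_at_of_near_pow_eq _ _ (hA i k) (hC i k) (ltnW ab) ACik.
  by rewrite expr0n subn_eq0 leqNgt ab mul0r.
- have := value_at_of_near_pow_eq _ _ (hC i k) (hA i k) (ltnW ba) CAik.
  by rewrite expr0n subn_eq0 leqNgt ba mul0r.
- have := value_at_of_near_pow_eq _ _ (hA i k) (hC i k) (eq_leq ab) ACik.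
  by rewrite ab subnn expr0 mul1r.
Qed.

Lemma factor_rows_zero_order {p s} (l : CC R)
    (W : CC R -> 'M[CC R]_(p, s)) (nu : 'I_p -> nat) :
  (forall i, zero_order l (fun z => row i (W z)) (nu i)) ->
  exists2 H : CC R -> 'M[CC R]_(p, s), holo_near l H &
    \forall z \near l, W z = diag_mx (\row_i (z - l) ^+ nu i) *m H z.
Proof.
move=> /choice[h hh]; exists (fun z => \matrix_i h i z).
  have : \forall z \near l, forall i, holo_at (h i) z.
    apply: (@filter_forall _ _ (fun i z => holo_at (h i) z) (nbhs l) _).
    by move=> i; case: (hh i).
  apply: filterS => z hz i j.
  rewrite /= (_ : (fun w => _) = fun w => h i w 0 j); first exact: hz.
  by apply/funext => w; rewrite mxE.
have : \forall z \near l, forall i, row i (W z) = (z - l) ^+ nu i *: h i z.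
  apply: (@filter_forall _ _
    (fun i z => row i (W z) = (z - l) ^+ nu i *: h i z) (nbhs l) _).
  by move=> i; case: (hh i) => _ [].
apply: filterS => z Wh; apply/matrixP => i j.
rewrite mul_diag_mx !mxE; move/matrixP/(_ 0 j): (Wh i).
by rewrite !mxE.
Qed.

End VanishingOrder.

Section GradedKernels.
Context {R : realType} {l : CC R} {r q : nat} {m : nat -> nat} {nu : 'I_r -> nat}.
Hypothesis m_tail : forall k : 'I_q, m (r + k)%N = 0%N.
Hypothesis m_dec : forall i j : 'I_r, (i <= j)%N -> (m j <= m i)%N.
Hypothesis nu_dec : forall i j : 'I_r, (i <= j)%N -> (nu j <= nu i)%N.
Hypothesis nu_sum : (\sum_(i < r) nu i = \sum_(i < r) m i)%N.

Local Notation D := (powdiag (r + q) l m).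

Lemma powdiag_tail_neq0 (k : 'I_q) :
  (\row_(i < r + q) (l - l) ^+ m i) 0 (rshift r k) != 0.
Proof. by rewrite mxE m_tail expr0 oner_neq0. Qed.

Lemma left_kernel_rsubmx0 {A : 'M[CC R]_(r, r + q)} :
  A *m D l = 0 -> rsubmx A = 0.
Proof. exact: rsubmx_eq0_mul_diag powdiag_tail_neq0. Qed.

Lemma right_kernel_dsubmx0 {B : 'M[CC R]_(r + q, r)} :
  D l *m B = 0 -> dsubmx B = 0.
Proof. exact: dsubmx_eq0_diag_mul powdiag_tail_neq0. Qed.

Context {A C : CC R -> 'M[CC R]_(r, r + q)}.
Hypotheses (hA : holo_at A l) (hC : holo_at C l).
Hypotheses (A0 : A l *m D l = 0) (rkA : \rank (A l) = r).
Hypothesis AC :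
  \forall z \near l, A z *m D z = diag_mx (\row_i (z - l) ^+ nu i) *m C z.

Let graded := graded_entries_at (fun k : 'I_(r + q) => m k) nu hA hC AC.

Lemma row_orders_eq_multiplicities i : nu i = m i.
Proof.
have /det_neq0_perm[s As] : \det (lsubmx (A l)) != 0.
  by rewrite -unitfE -unitmxE lsubmx_unit ?left_kernel_rsubmx0.
have nu_le i' : (nu i' <= m (s i'))%N.
  rewrite leqNgt; apply/negP => lt; have [A_0 _ _] := graded i' (lshift q (s i')).
  by move/prodf_neq0/(_ i' isT): As; rewrite mxE A_0 ?eqxx.
have nu_s : forall i', nu i' = m (s i').
  apply: (@sum_leq_eq _ nu (fun i => m (s i)) nu_le).
  by rewrite nu_sum (reindex_inj (@perm_inj _ s)).
exact: nonincreasing_perm_eq nu_s nu_dec m_dec i.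
Qed.

Lemma det_lsubmx_eq : \det (lsubmx (A l)) = \det (lsubmx (C l)).
Proof.
apply: (det_eq_graded (fun i : 'I_r => m i)) => i k; rewrite !mxE.
all: have [A_0 C_0 AC_eq] := graded i (lshift q k).
all: rewrite row_orders_eq_multiplicities in A_0 C_0 AC_eq.
- exact: A_0.
- exact: C_0.
- by move/esym/AC_eq.
Qed.

End GradedKernels.

Lemma left_canonical_kernel {R : realType} {n r} {Omega : set (CC R)} {l}
    {T : CC R -> 'M[CC R]_n} {m} {V : CC R -> 'M[CC R]_(r, n)} :
  left_canonical Omega l T m V -> V l *m T l = 0.
Proof.
case=> _ [Vroot _]; apply/row_matrixP => i.
by rewrite row_mul (Vroot i).2 row0.
Qed.

Lemma right_canonical_kernel {R : realType} {n r} {Omega : set (CC R)} {l}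
    {T : CC R -> 'M[CC R]_n} {m} {Y : CC R -> 'M[CC R]_(n, r)} :
  right_canonical Omega l T m Y -> T l *m Y l = 0.
Proof.
case=> _ [Yroot _]; apply: trmx_inj; rewrite trmx_mul trmx0.
apply/row_matrixP => j.
by rewrite row_mul -tr_col -trmx_mul (Yroot j).2 trmx0 row0.
Qed.

Lemma left_reduced_product_unimodular {R : realType} {l : CC R} {r q : nat}
    {T UL UR : CC R -> 'M[CC R]_(r + q)} {m : nat -> nat}
    {V : CC R -> 'M[CC R]_(r, r + q)} {Y : CC R -> 'M[CC R]_(r + q, r)}
    {nu : 'I_r -> nat} :
  (forall k : 'I_q, m (r + k)%N = 0%N) ->
  (forall i j : 'I_r, (i <= j)%N -> (m j <= m i)%N) ->
  unimodular l UL -> unimodular l UR ->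
  (\forall z \near l, UL z *m T z *m UR z = powdiag (r + q) l m z) ->
  holo_near l V -> holo_near l Y ->
  V l *m T l = 0 -> T l *m Y l = 0 -> \rank (V l) = r -> \rank (Y l) = r ->
  (forall i : 'I_r, zero_order l (fun z => row i (V z) *m T z) (nu i)) ->
  (\sum_(i < r) nu i = \sum_(i < r) m i)%N ->
  (forall i j : 'I_r, (i <= j)%N -> (nu j <= nu i)%N) ->
  exists M : CC R -> 'M[CC R]_r, unimodular l M /\
    \forall z \near l^', M z = invmx (powdiag r l m z) *m (V z *m T z *m Y z).
Proof.
move=> m_tail m_dec uUL uUR smith hV hY V0 Y0 rkV rkY nuV nu_sum nu_dec.
have [_ [ULi [hULi ULK]]] := uUL; have [hUR _] := uUR.
have [H hH VTH] : exists2 H : CC R -> 'M[CC R]_(r, r + q), holo_near l H &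
    \forall z \near l, V z *m T z = diag_mx (\row_i (z - l) ^+ nu i) *m H z.
  apply: factor_rows_zero_order => i.
  by under eq_fun do rewrite row_mul; exact: nuV.
have TUR : \forall z \near l, T z *m UR z = ULi z *m powdiag (r + q) l m z.
  by apply: filterS2 ULK smith => z [_ ULiUL] <-; rewrite !mulmxA ULiUL mul1mx.
pose A z := V z *m ULi z; pose C z := H z *m UR z.
have AC : \forall z \near l,
    A z *m powdiag (r + q) l m z = diag_mx (\row_i (z - l) ^+ nu i) *m C z.
  apply: filterS2 TUR VTH => z TURz VTHz.
  by rewrite -mulmxA -TURz mulmxA VTHz mulmxA.
have hA : holo_at A l := holo_at_mul (nbhs_singleton hV) (nbhs_singleton hULi).
have hC : holo_at C l := holo_at_mul (nbhs_singleton hH) (nbhs_singleton hUR).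
have A0 : A l *m powdiag (r + q) l m l = 0.
  by rewrite -mulmxA -(nbhs_singleton TUR) mulmxA V0 mul0mx.
have rkA : \rank (A l) = r.
  by rewrite mxrankMfree // row_free_unit (mulmx1_unit (nbhs_singleton ULK).2).1.
have nu_m :=
  row_orders_eq_multiplicities m_tail m_dec nu_dec nu_sum hA hC A0 rkA AC.
have C_unit : lsubmx (C l) \in unitmx.
  rewrite unitmxE -(det_lsubmx_eq m_tail m_dec nu_dec nu_sum hA hC A0 rkA AC).
  by rewrite -unitmxE (lsubmx_unit (left_kernel_rsubmx0 m_tail A0) rkA).
pose B := invmx (UR l) *m Y l.
have DB : powdiag (r + q) l m l *m B = 0.
  have DUR : powdiag (r + q) l m l *m invmx (UR l) = UL l *m T l.
    by rewrite -(nbhs_singleton smith) mulmxK ?unimodular_unit.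
  by rewrite mulmxA DUR -mulmxA Y0 mulmx0.
have rkB : \rank B = r.
  by rewrite eqmxMfull ?row_full_unit ?unitmx_inv ?unimodular_unit.
have B2 := right_kernel_dsubmx0 m_tail DB.
exists (fun z => H z *m Y z); split.
  apply: unimodular_of_det (holo_near_mul hH hY) _.
  rewrite (_ : H l *m Y l = C l *m B); last first.
    by rewrite !mulmxA -(mulmxA (H l)) mulmxV ?mulmx1 ?unimodular_unit.
  rewrite (mulmx_dsubmx0 _ B2) det_mulmx mulf_neq0 // -unitfE -unitmxE //.
  exact: usubmx_unit.
rewrite near_withinE; apply: filterS VTH => z VTHz /= zl.
rewrite VTHz (_ : diag_mx (\row_i (z - l) ^+ nu i) = powdiag r l m z).
  by rewrite -mulmxA mulKmx ?powdiag_unit.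
by rewrite /powdiag; apply: congr1; apply/rowP => i; rewrite !mxE nu_m.
Qed.

Lemma right_reduced_product_unimodular {R : realType} {l : CC R} {r q : nat}
    {T UL UR : CC R -> 'M[CC R]_(r + q)} {m : nat -> nat}
    {V : CC R -> 'M[CC R]_(r, r + q)} {Y : CC R -> 'M[CC R]_(r + q, r)}
    {nu : 'I_r -> nat} :
  (forall k : 'I_q, m (r + k)%N = 0%N) ->
  (forall i j : 'I_r, (i <= j)%N -> (m j <= m i)%N) ->
  unimodular l UL -> unimodular l UR ->
  (\forall z \near l, UL z *m T z *m UR z = powdiag (r + q) l m z) ->
  holo_near l V -> holo_near l Y ->
  V l *m T l = 0 -> T l *m Y l = 0 -> \rank (V l) = r -> \rank (Y l) = r ->
  (forall i : 'I_r, zero_order l (fun z => T z *m col i (Y z)) (nu i)) ->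
  (\sum_(i < r) nu i = \sum_(i < r) m i)%N ->
  (forall i j : 'I_r, (i <= j)%N -> (nu j <= nu i)%N) ->
  exists M : CC R -> 'M[CC R]_r, unimodular l M /\
    \forall z \near l^', M z = (V z *m T z *m Y z) *m invmx (powdiag r l m z).
Proof.
move=> m_tail m_dec uUL uUR smith hV hY V0 Y0 rkV rkY nuY nu_sum nu_dec.
have smith' : \forall z \near l,
    (UR z)^T *m (T z)^T *m (UL z)^T = powdiag (r + q) l m z.
  apply: filterS smith => z TD.
  by rewrite -!trmx_mul mulmxA TD /powdiag tr_diag_mx.
have ordY' i : zero_order l (fun z => row i (Y z)^T *m (T z)^T) (nu i).
  by under eq_fun do rewrite -tr_col -trmx_mul; exact: zero_order_tr.
have Y0' : (Y l)^T *m (T l)^T = 0 by rewrite -trmx_mul Y0 trmx0.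
have V0' : (T l)^T *m (V l)^T = 0 by rewrite -trmx_mul V0 trmx0.
have [M [uM EM]] := left_reduced_product_unimodular m_tail m_dec
  (unimodular_tr uUR) (unimodular_tr uUL) smith' (holo_near_tr hY)
  (holo_near_tr hV) Y0' V0' (etrans (mxrank_tr _) rkY)
  (etrans (mxrank_tr _) rkV) ordY' nu_sum nu_dec.
exists (fun z => (M z)^T); split; first exact: unimodular_tr.
apply: filterS EM => z ->.
by rewrite trmx_mul trmx_inv /powdiag tr_diag_mx !trmx_mul !trmxK mulmxA.
Qed.

Theorem mainTheorem7 (R : realType) (Omega : set (CC R)) (lam0 : CC R)
  (n : nat) (T : CC R -> 'M[CC R]_n)
  (hOmega : open Omega) (hlam0 : Omega lam0)
  (hT : holo_on Omega T)
  (hdet : exists z, Omega z /\ \det (T z) != 0)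
  (hdet0 : \det (T lam0) = 0)
  (r : nat) (hr : r = (n - \rank (T lam0))%N)
  (m : nat -> nat) (UL UR : CC R -> 'M[CC R]_n)
  (hm : forall i j, (i <= j)%N -> (j < n)%N -> (m j <= m i)%N)
  (hUL : unimodular lam0 UL) (hUR : unimodular lam0 UR)
  (hsmith : \forall z \near lam0, UL z *m T z *m UR z = powdiag n lam0 m z)
  (V : CC R -> 'M[CC R]_(r, n)) (Y : CC R -> 'M[CC R]_(n, r))
  (hV : left_canonical Omega lam0 T m V)
  (hY : right_canonical Omega lam0 T m Y) :
  (exists M : CC R -> 'M[CC R]_r,
     unimodular lam0 M /\
     \forall z \near lam0^',
        M z = invmx (powdiag r lam0 m z) *m (V z *m T z *m Y z)) /\
  (exists M : CC R -> 'M[CC R]_r,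
     unimodular lam0 M /\
     \forall z \near lam0^',
        M z = (V z *m T z *m Y z) *m invmx (powdiag r lam0 m z)).
Proof.
have rkT : \rank (T lam0) = \rank (powdiag n lam0 m lam0).
  rewrite -(nbhs_singleton hsmith) mxrankMfree ?row_free_unit ?unimodular_unit //.
  by rewrite eqmxMfull ?row_full_unit ?unimodular_unit.
have m_tail k : (r <= k)%N -> (k < n)%N -> m k = 0%N.
  by rewrite hr rkT; exact: powdiag_tail_eq0.
have [q n_rq] : exists q, n = (r + q)%N.
  by exists (n - r)%N; rewrite subnKC // hr leq_subr.
subst n.
have m_tail' (k : 'I_q) : m (r + k)%N = 0%N.
  by rewrite m_tail ?leq_addr ?ltn_add2l.
have m_dec (i j : 'I_r) : (i <= j)%N -> (m j <= m i)%N.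
  by move=> ij; apply: hm ij (ltn_addr q (ltn_ord j)).
have V0 := left_canonical_kernel hV; have Y0 := right_canonical_kernel hY.
case: hV => hVO [_ [rkV [nuV [ordV [sumV decV]]]]].
case: hY => hYO [_ [rkY [nuY [ordY [sumY decY]]]]].
have hV := holo_on_near hOmega hlam0 hVO.
have hY := holo_on_near hOmega hlam0 hYO.
split.
  exact: left_reduced_product_unimodular m_tail' m_dec hUL hUR hsmith hV hY
    V0 Y0 rkV rkY ordV sumV decV.
exact: right_reduced_product_unimodular m_tail' m_dec hUL hUR hsmith hV hY
  V0 Y0 rkV rkY ordY sumY decY.
Qed.
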